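(* The collection $\{\mathcal H_X^*\}_{X\in Ob(\mathscr C)}$ is a set of projective generators for ${^\mathscr C}Ctr$.
   Context: $K$ is a field; $(U',U):=Hom_K(U',U)$. A coalgebra $\mathscr C$ with several objects has a set $Ob(\mathscr C)$, vector spaces $\mathscr C(X,Y)$, and coassociative, counital maps $\delta_{XYZ}:\mathscr C(X,Z)\to \mathscr C(Y,Z)\otimes \mathscr C(X,Y)$, $\epsilon_X:\mathscr C(X,X)\to K$. ${^\mathscr C}Ctr$ is the category of left $\mathscr C$-contramodules: families of vector spaces $\mathcal M(X)$ with maps $\pi_{XY}:(\mathscr C(X,Y),\mathcal M(Y))\to\mathcal M(X)$ satisfying $\pi_{XZ}\circ(\delta_{XYZ},\mathcal M(Z))=\pi_{XY}\circ(\mathscr C(X,Y),\pi_{YZ})$ (via the hom-tensor identification) and $\pi_{XX}\circ(\epsilon_X,\mathcal M(X))=id$; morphisms are families of linear maps compatible with the $\pi$'s. It is abelian with kernels and cokernels computed objectwise. $\mathcal H_X^*$ denotes the contramodule $Y\mapsto (\mathscr C(Y,X),K)$ with structure maps induced by $(\delta_{YZX},K)$. *)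

From HB Require Import structures.
From mathcomp Require Import all_boot all_algebra.
From mathcomp Require Import boolp classical_sets functions.
Unset Printing Implicit Defensive.
Import GRing.Theory.
Local Open Scope ring_scope.

Definition linmap {K : fieldType} {U V : lmodType K} (f : U -> V) : Prop :=
  forall (a : K) (u v : U), f (a *: u + v) = a *: f u + f v.

(** The dual space (V, K) = Hom_K(V, K), as a sub-vector-space of V -> K. *)
Section Dual.
Variables (K : fieldType) (V : lmodType K).

Definition linb : {pred V -> K^o} := fun f => `[< linmap f >].

Lemma linb_submod_closed : submod_closed linb.
Proof.
split.
  apply/asboolP => a u v /=; by rewrite scaler0 addr0.
move=> a f g /asboolP Hf /asboolP Hg; apply/asboolP => b u v /=.
rewrite !fctE Hf Hg !scalerDr !scalerA mulrC !addrA.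
by congr (_ + _); rewrite -!addrA; congr (_ + _); rewrite addrC.
Qed.

HB.instance Definition _ :=
  GRing.isSubmodClosed.Build K (V -> K^o) linb linb_submod_closed.

Record dualsp := Dualsp { dfun :> V -> K^o; _ : dfun \in linb }.
HB.instance Definition _ := [isSub for dfun].
HB.instance Definition _ := [Choice of dualsp by <:].
HB.instance Definition _ := [SubChoice_isSubLmodule of dualsp by <:].

(** a function into K, packaged as an element of the dual space when it is
    linear (and 0 otherwise; only used on linear functions). *)
Definition to_dual (f : V -> K^o) : dualsp := insubd 0 f.
End Dual.
Arguments dualsp {K}.
Arguments to_dual {K V}.
Arguments linb {K}.

(** Elements of a tensor product C(Y,Z) ⊗ C(X,Y) are represented by finite
    lists of pairs (sums of pure tensors); two such representatives denote the
    same tensor iff they agree under every f ⊗ g with f, g linear functionals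
    (over a field the pure functionals separate the points of a tensor product). *)
Record coalg_data (K : fieldType) := CoalgData {
  cObj : Type;
  cHom : cObj -> cObj -> lmodType K;
  cdelta : forall X Y Z, cHom X Z -> seq (cHom Y Z * cHom X Y);
  ceps : forall X, cHom X X -> K^o
}.
Arguments cObj {K}.
Arguments cHom {K}.
Arguments cdelta {K}.
Arguments ceps {K}.

Section Coalg.
Variables (K : fieldType) (C : coalg_data K).
Local Notation Ob := (cObj C).
Local Notation H := (@cHom K C).
Local Notation δ := (@cdelta K C).
Local Notation ε := (@ceps K C).

Definition tev2 {A B : lmodType K} (s : seq (A * B)) (f : A -> K^o) (g : B -> K^o) : K :=
  \sum_(p <- s) f p.1 * g p.2.

Definition is_coalg : Prop :=
  (forall X, linmap (ε X)) /\
  (* δ_XYZ is linear (as a map into the tensor product) *)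
  (forall X Y Z (f : H Y Z -> K^o) (g : H X Y -> K^o), linmap f -> linmap g ->
     forall (a : K) (c c' : H X Z),
       tev2 (δ X Y Z (a *: c + c')) f g
       = a * tev2 (δ X Y Z c) f g + tev2 (δ X Y Z c') f g) /\
  (* coassociativity: (δ_YWZ ⊗ id) δ_XYZ = (id ⊗ δ_XYW) δ_XWZ
     in C(W,Z) ⊗ C(Y,W) ⊗ C(X,Y) *)
  (forall X Y W Z (f : H W Z -> K^o) (g : H Y W -> K^o) (h : H X Y -> K^o),
     linmap f -> linmap g -> linmap h -> forall c : H X Z,
       \sum_(p <- δ X Y Z c) tev2 (δ Y W Z p.1) f g * h p.2
       = \sum_(p <- δ X W Z c) f p.1 * tev2 (δ X Y W p.2) g h) /\
  (forall X Y (c : H X Y), \sum_(p <- δ X Y Y c) ε Y p.1 *: p.2 = c) /\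
  (forall X Y (c : H X Y), \sum_(p <- δ X X Y c) ε X p.2 *: p.1 = c).

(** ** Left C-contramodules.
    ctr_pi X Y : (C(X,Y), M(Y)) -> M(X); its argument is given as a function
    and is only ever used on linear ones. *)
Record ctr_data := CtrData {
  ctr_M : Ob -> lmodType K;
  ctr_pi : forall X Y, (H X Y -> ctr_M Y) -> ctr_M X
}.

Definition is_ctr (M : ctr_data) : Prop :=
  (forall X Y (phi psi : H X Y -> ctr_M M Y) (a : K),
     linmap phi -> linmap psi ->
     ctr_pi M X Y (fun c => a *: phi c + psi c) = a *: ctr_pi M X Y phi + ctr_pi M X Y psi) /\
  (* contra-associativity: π_XZ ∘ (δ_XYZ, M(Z)) = π_XY ∘ (C(X,Y), π_YZ),
     where phi ∈ (C(X,Y), (C(Y,Z), M(Z))) ≅ (C(Y,Z) ⊗ C(X,Y), M(Z)) *)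
  (forall X Y Z (phi : H X Y -> H Y Z -> ctr_M M Z),
     (forall b, linmap (phi b)) ->
     (forall (a : K) b b' c, phi (a *: b + b') c = a *: phi b c + phi b' c) ->
     ctr_pi M X Z (fun c : H X Z => \sum_(p <- δ X Y Z c) phi p.2 p.1)
     = ctr_pi M X Y (fun b : H X Y => ctr_pi M Y Z (phi b))) /\
  (forall X (m : ctr_M M X), ctr_pi M X X (fun c : H X X => ε X c *: m) = m).

Definition is_ctr_morph {M N : ctr_data}
    (f : forall X, ctr_M M X -> ctr_M N X) : Prop :=
  (forall X, linmap (f X)) /\
  (forall X Y (phi : H X Y -> ctr_M M Y), linmap phi ->
     f X (ctr_pi M X Y phi) = ctr_pi N X Y (fun c => f Y (phi c))).

(** Projective object of ^C Ctr: lifting along epimorphisms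
    (epimorphisms of ^C Ctr are the objectwise surjective morphisms,
    cokernels being computed objectwise). *)
Definition ctr_projective (P : ctr_data) : Prop :=
  forall (M N : ctr_data) (g : forall X, ctr_M M X -> ctr_M N X)
         (f : forall X, ctr_M P X -> ctr_M N X),
    is_ctr M -> is_ctr N ->
    is_ctr_morph g -> (forall X, forall y : ctr_M N X, exists x : ctr_M M X, g X x = y) -> is_ctr_morph f ->
    exists h : forall X, ctr_M P X -> ctr_M M X,
      is_ctr_morph h /\ forall X (x : ctr_M P X), g X (h X x) = f X x.

Definition ctr_generators (I : Type) (G : I -> ctr_data) : Prop :=
  forall (M N : ctr_data) (u v : forall X, ctr_M M X -> ctr_M N X),
    is_ctr M -> is_ctr N -> is_ctr_morph u -> is_ctr_morph v ->
    (forall (i : I) (h : forall X, ctr_M (G i) X -> ctr_M M X),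
        is_ctr_morph h -> forall X (x : ctr_M (G i) X), u X (h X x) = v X (h X x)) ->
    forall X (m : ctr_M M X), u X m = v X m.

(** The contramodule H_X^* : Y |-> (C(Y,X), K), with structure maps
    (C(Y,Z), (C(Z,X),K)) ≅ (C(Z,X) ⊗ C(Y,Z), K) --(δ_YZX, K)--> (C(Y,X), K). *)
Definition Hstar_pi (X : Ob) (Y Z : Ob)
    (phi : H Y Z -> dualsp (H Z X)) : dualsp (H Y X) :=
  to_dual (fun c : H Y X => \sum_(p <- δ Y Z X c) (phi p.2 : H Z X -> K^o) p.1).

Definition Hstar (X : Ob) : ctr_data :=
  @CtrData (fun Y => dualsp (H Y X)) (fun Y Z phi => Hstar_pi X Y Z phi).

End Coalg.

From mathcomp Require Import all_boot all_algebra boolp functions.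
From mathcomp Require Import ring.
Set Implicit Arguments.
Unset Strict Implicit.
Import GRing.Theory.
Local Open Scope ring_scope.

(* The structure maps of H_X^* are the transposes of the comultiplication, so
   the contramodule axioms for H_X^* are coassociativity and counitality of C
   read through dual spaces.  The only work there is to pass from the pure
   functionals f ⊗ g, against which the tensor identities of C are given, to
   arbitrary bilinear forms: a form that does not vanish on the tensor can be
   lowered in rank by subtracting a pure tensor, until it vanishes identically
   on the finitely many vectors involved.
   H_X^* is then free on the generator ε_X in degree X (Yoneda): for a
   contramodule M and m in M(X), ψ ↦ π_YX(c ↦ ψ(c) m) is a morphism
   H_X^* → M sending ε_X to m, and every morphism out of H_X^* has this form.
   Hence Hom(H_X^*, M) ≅ M(X), which preserves surjections (projectivity) and
   detects equality of morphisms (generation). *)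

Section LinearMaps.
Variables (K : fieldType) (U W : lmodType K) (f : U -> W).
Hypothesis f_lin : linmap f.

Lemma linmap0 : f 0 = 0.
Proof.
have f00 := f_lin 1 0 0; rewrite scaler0 addr0 scale1r in f00.
by apply: (addIr (f 0)); rewrite add0r -f00.
Qed.

Lemma linmapZ a u : f (a *: u) = a *: f u.
Proof. by have := f_lin a u 0; rewrite !addr0 linmap0 addr0. Qed.

Lemma linmapD u v : f (u + v) = f u + f v.
Proof. by have := f_lin 1 u v; rewrite !scale1r. Qed.

Lemma linmapN u : f (- u) = - f u.
Proof. by rewrite -scaleN1r linmapZ scaleN1r. Qed.

Lemma linmap_sum (I : Type) (r : seq I) (F : I -> U) :
  f (\sum_(i <- r) F i) = \sum_(i <- r) f (F i).
Proof.
elim: r => [|x r IHr]; first by rewrite !big_nil linmap0.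
by rewrite !big_cons linmapD IHr.
Qed.

End LinearMaps.

Lemma linmap_scaler (K : fieldType) (U W : lmodType K) (psi : U -> K^o) (m : W) :
  linmap psi -> linmap (fun c => psi c *: m).
Proof. by move=> psi_lin a u v; rewrite psi_lin scalerDl scalerA. Qed.

Lemma linmap_comb (K : fieldType) (U W : lmodType K) (phi psi : U -> W) a :
  linmap phi -> linmap psi -> linmap (fun c => a *: phi c + psi c).
Proof.
move=> phi_lin psi_lin b u v; rewrite phi_lin psi_lin !scalerDr !scalerA.
by rewrite [b * a]mulrC addrACA.
Qed.

Lemma sub_count_lt (T : Type) (a1 a2 : pred T) (s : seq T) :
  subpred a1 a2 -> has (predD a2 a1) s -> (count a1 s < count a2 s)%N.
Proof.
move=> sub12; elim: s => //= x s IHs /orP [/andP [/negbTE -> ->] | /IHs lt12].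
  by rewrite add1n ltnS; apply: sub_count.
by case: (boolP (a1 x)) => [/sub12 -> | _]; rewrite ?add1n ?ltnS // add0n ltn_addl.
Qed.

Section PureTensorSeparation.
Variables (K : fieldType) (U V : lmodType K).

Definition bilinmap (B : U -> V -> K^o) : Prop :=
  (forall u, linmap (B u)) /\ (forall v, linmap (B^~ v)).

Section RankReduction.
Variable L : seq (U * V).
Hypothesis L_pure0 : forall f g, linmap f -> linmap g -> tev2 K L f g = 0.

Let nz_rows (B : U -> V -> K^o) :=
  count (fun p => has (fun q => B p.1 q.2 != 0) L) L.

Lemma sum_bilin_eq0 B : bilinmap B -> \sum_(p <- L) B p.1 p.2 = 0.
Proof.
have [n] := ubnP (nz_rows B); elim: n B => // n IHn B rkB [B1 B2].
have [/hasP [p0 p0L /hasP [q0 q0L nz_w]] | /hasPn zeroB] :=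
  boolP (has (fun p => has (fun q => B p.1 q.2 != 0) L) L); last first.
  rewrite big_seq big1 // => p pL.
  by move/hasPn: (zeroB p pL) => /(_ p pL); rewrite negbK => /eqP.
set w := B p0.1 q0.2 in nz_w.
(* Subtracting the rank-one form B(., q0.2) B(p0.1, .) / w kills the row of
   p0 and keeps zero rows zero; being a pure tensor, it does not change the
   sum. *)
pose B' u v := B u v - B u q0.2 * B p0.1 v / w.
have B'_bilin : bilinmap B'.
  split=> [u|v] a x y; rewrite /B' /= ?(B1 u) ?(B1 p0.1) ?(B2 v) ?(B2 q0.2);
  by rewrite /GRing.scale /=; ring.
have rkB' : (nz_rows B' < nz_rows B)%N.
  apply: sub_count_lt => [p|]; last first.
    apply/hasP; exists p0 => //=; apply/andP; split; last by apply/hasP; exists q0.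
    apply/hasPn => q _; rewrite negbK /B' -/w.
    by rewrite mulrAC divff // mul1r subrr.
  apply: contraLR => /hasPn zero_p; apply/hasPn => q qL; rewrite negbK /B'.
  move: (zero_p q qL) (zero_p q0 q0L); rewrite !negbK => /eqP -> /eqP ->.
  by rewrite !mul0r subr0.
have f_lin : linmap (fun u => B u q0.2 / w : K^o).
  by move=> a u v; rewrite (B2 q0.2) /= /GRing.scale /= mulrDl mulrA.
have -> : \sum_(p <- L) B p.1 p.2 =
    \sum_(p <- L) B' p.1 p.2 + tev2 K L (fun u => B u q0.2 / w) (B p0.1).
  by rewrite -big_split /=; apply: eq_bigr => p _; rewrite /B' mulrAC subrK.
rewrite (L_pure0 f_lin (B1 p0.1)) addr0; apply: IHn B'_bilin.
by rewrite -ltnS (leq_trans _ rkB) // ltnS.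
Qed.

End RankReduction.

Lemma sum_bilin_eq (L1 L2 : seq (U * V)) B : bilinmap B ->
  (forall f g, linmap f -> linmap g -> tev2 K L1 f g = tev2 K L2 f g) ->
  \sum_(p <- L1) B p.1 p.2 = \sum_(p <- L2) B p.1 p.2.
Proof.
move=> [B1 B2] L12.
pose negL2 := [seq (- p.1, p.2) | p <- L2].
have sum_negL2 (F : U -> V -> K^o) : (forall v, linmap (F^~ v)) ->
    \sum_(p <- negL2) F p.1 p.2 = - \sum_(p <- L2) F p.1 p.2.
  move=> F2; rewrite big_map -sumrN.
  by apply: eq_bigr => p _; rewrite (linmapN (F2 _)).
have pure0 f g : linmap f -> linmap g -> tev2 K (L1 ++ negL2) f g = 0.
  move=> f_lin g_lin; move: (L12 f g f_lin g_lin); rewrite /tev2 big_cat.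
  rewrite (sum_negL2 (fun u v => f u * g v)) => [->|v]; first exact: subrr.
  exact: linmap_scaler.
have := sum_bilin_eq0 pure0 (conj B1 B2).
by rewrite big_cat sum_negL2 // => /eqP; rewrite subr_eq0 => /eqP.
Qed.

End PureTensorSeparation.

Section DualSpace.
Variables (K : fieldType) (V : lmodType K).
Implicit Types d e : dualsp V.

Lemma to_dualE (F : V -> K^o) : linmap F -> forall v, to_dual F v = F v.
Proof. by move=> F_lin v; rewrite /to_dual insubdK // unfold_in; apply/asboolP. Qed.

Lemma dual_linmap d : linmap d.
Proof. by case: d => f /=; rewrite unfold_in => /asboolP. Qed.

Lemma dual_ext d e : (forall v, d v = e v) -> d = e.
Proof. by move=> de; apply: val_inj; apply: funext. Qed.

Lemma dualD d e v : (d + e) v = d v + e v.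
Proof. by rewrite -[LHS]/(val (d + e) v) raddfD. Qed.

Lemma dualZ a d v : (a *: d) v = a * d v.
Proof. by rewrite -[LHS]/(val (a *: d) v) linearZ. Qed.

Lemma dual_sum (I : Type) (r : seq I) (F : I -> dualsp V) v :
  (\sum_(i <- r) F i) v = \sum_(i <- r) F i v.
Proof. by rewrite -[LHS]/(val (\sum_(i <- r) F i) v) raddf_sum fct_sumE. Qed.

Lemma linmap_dual (U : lmodType K) (F : U -> dualsp V) :
  (forall v, linmap (fun c => F c v : K^o)) -> linmap F.
Proof. by move=> F_lin a c c'; apply: dual_ext => v; rewrite dualD dualZ F_lin. Qed.

Lemma dual_scaler_linmap (W : lmodType K) d (m : W) :
  linmap (fun v => (d v : K) *: m).
Proof. exact/linmap_scaler/dual_linmap. Qed.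

Lemma eval_bilinmap : bilinmap (fun (v : V) (d : dualsp V) => d v : K^o).
Proof. by split=> [v a d e|d]; [rewrite dualD dualZ | apply: dual_linmap]. Qed.

End DualSpace.

Section Coalgebra.
Variables (K : fieldType) (C : coalg_data K).
Hypothesis C_coalg : is_coalg K C.
Local Notation H := (@cHom K C).
Local Notation δ := (@cdelta K C).
Local Notation ε := (@ceps K C).

Lemma eps_linmap X : linmap (ε X).
Proof. by case: C_coalg. Qed.

Lemma delta_sum_linmap Y W Z (B : H W Z -> H Y W -> K^o) : bilinmap B ->
  linmap (fun c : H Y Z => \sum_(p <- δ Y W Z c) B p.1 p.2 : K^o).
Proof.
move=> B_bilin a c c'; have [_ B2] := B_bilin.
have [_ [delta_lin _]] := C_coalg.
pose L := [seq (a *: p.1, p.2) | p <- δ Y W Z c] ++ δ Y W Z c'.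
rewrite (sum_bilin_eq (L2 := L)) //.
  rewrite big_cat big_map /GRing.scale /= mulr_sumr; congr (_ + _).
  by apply: eq_bigr => p _; rewrite (linmapZ (B2 _)).
move=> f g f_lin g_lin; rewrite delta_lin // /tev2 big_cat big_map mulr_sumr.
by congr (_ + _); apply: eq_bigr => p _; rewrite (linmapZ f_lin) mulrA.
Qed.

Lemma Hstar_piE X Y Z (Phi : H Y Z -> dualsp (H Z X)) : linmap Phi ->
  forall d, Hstar_pi K C X Y Z Phi d = \sum_(q <- δ Y Z X d) Phi q.2 q.1.
Proof.
move=> Phi_lin d; rewrite /Hstar_pi to_dualE //.
apply: (@delta_sum_linmap _ _ _ (fun x y => Phi y x)).
have [E1 E2] := eval_bilinmap (H Z X).
by split=> [x a y y'|y]; [rewrite Phi_lin E1 | apply: E2].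
Qed.

Lemma coassoc_bilin Y W Z X (f : H Z X -> K^o) (R : H W Z -> H Y W -> K^o) :
  linmap f -> bilinmap R -> forall d,
  \sum_(q <- δ Y W X d) \sum_(r <- δ W Z X q.1) f r.1 * R r.2 q.2
  = \sum_(p <- δ Y Z X d) \sum_(s <- δ Y W Z p.2) f p.1 * R s.1 s.2.
Proof.
move=> f_lin R_bilin d; have [_ R2] := R_bilin.
have [_ [_ [coassoc _]]] := C_coalg.
transitivity (\sum_(p <- flatten [seq [seq (f r.1 *: r.2, q.2) | r <- δ W Z X q.1]
                                 | q <- δ Y W X d]) R p.1 p.2).
  rewrite big_flatten big_map; apply: eq_bigr => q _; rewrite big_map.
  by apply: eq_bigr => r _; rewrite (linmapZ (R2 _)).
transitivity (\sum_(p <- flatten [seq [seq (f p.1 *: s.1, s.2) | s <- δ Y W Z p.2]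
                                 | p <- δ Y Z X d]) R p.1 p.2); last first.
  rewrite big_flatten big_map; apply: eq_bigr => p _; rewrite big_map.
  by apply: eq_bigr => s _; rewrite (linmapZ (R2 _)).
apply: sum_bilin_eq => // g h g_lin h_lin; rewrite /tev2 !big_flatten !big_map.
transitivity (\sum_(q <- δ Y W X d) tev2 K (δ W Z X q.1) f g * h q.2).
  apply: eq_bigr => q _; rewrite big_map mulr_suml.
  by apply: eq_bigr => r _; rewrite (linmapZ g_lin).
rewrite coassoc //; apply: eq_bigr => p _; rewrite big_map mulr_sumr.
by apply: eq_bigr => s _; rewrite (linmapZ g_lin) /GRing.scale /= mulrA.
Qed.

Lemma coassoc_dual Y W Z X (phi : H Y W -> H W Z -> dualsp (H Z X)) :
  (forall b, linmap (phi b)) ->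
  (forall a b b' c, phi (a *: b + b') c = a *: phi b c + phi b' c) ->
  forall d, \sum_(q <- δ Y W X d) \sum_(r <- δ W Z X q.1) phi q.2 r.2 r.1
          = \sum_(p <- δ Y Z X d) \sum_(s <- δ Y W Z p.2) phi s.2 s.1 p.1.
Proof.
move=> phi_lin2 phi_lin1 d.
transitivity (\sum_(p <- flatten [seq [seq (r.1, phi q.2 r.2) | r <- δ W Z X q.1]
                                 | q <- δ Y W X d]) p.2 p.1).
  by rewrite big_flatten big_map; apply: eq_bigr => q _; rewrite big_map.
transitivity (\sum_(p <- flatten [seq [seq (p.1, phi s.2 s.1) | s <- δ Y W Z p.2]
                                 | p <- δ Y Z X d]) p.2 p.1); last first.
  by rewrite big_flatten big_map; apply: eq_bigr => p _; rewrite big_map.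
apply: (sum_bilin_eq (B := fun x (e : dualsp (H Z X)) => e x)).
  exact: eval_bilinmap.
move=> f g f_lin g_lin.
rewrite /tev2 !big_flatten !big_map.
under eq_bigr do rewrite big_map.
under [RHS]eq_bigr do rewrite big_map.
apply: (coassoc_bilin (R := fun y z => g (phi z y))) => //.
by split=> [y a z z'|z a y y'];
  rewrite ?phi_lin1 ?phi_lin2 (linmapD g_lin) (linmapZ g_lin).
Qed.

Lemma Hstar_pi_linear X Y Z (phi psi : H Y Z -> dualsp (H Z X)) a :
  linmap phi -> linmap psi ->
  Hstar_pi K C X Y Z (fun c => a *: phi c + psi c) =
  a *: Hstar_pi K C X Y Z phi + Hstar_pi K C X Y Z psi.
Proof.
move=> phi_lin psi_lin; apply: dual_ext => d.
rewrite dualD dualZ !Hstar_piE //; last exact: linmap_comb.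
rewrite mulr_sumr -big_split; apply: eq_bigr => q _.
by rewrite dualD dualZ.
Qed.

Lemma Hstar_pi_assoc X Y W Z (phi : H Y W -> H W Z -> dualsp (H Z X)) :
  (forall b, linmap (phi b)) ->
  (forall a b b' c, phi (a *: b + b') c = a *: phi b c + phi b' c) ->
  Hstar_pi K C X Y Z (fun c => \sum_(p <- δ Y W Z c) phi p.2 p.1) =
  Hstar_pi K C X Y W (fun b => Hstar_pi K C X W Z (phi b)).
Proof.
move=> phi_lin2 phi_lin1.
have sum_lin : linmap (fun c => \sum_(p <- δ Y W Z c) phi p.2 p.1).
  apply: linmap_dual => x.
  under [fun c => _]funext => c do rewrite dual_sum.
  apply: (@delta_sum_linmap _ _ _ (fun y z => phi z y x)).
  by split=> [y a z z'|z a y y']; rewrite ?phi_lin1 ?phi_lin2 dualD dualZ.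
have pi_lin : linmap (fun b => Hstar_pi K C X W Z (phi b)).
  apply: linmap_dual => e a b b'.
  rewrite !Hstar_piE // /GRing.scale /= mulr_sumr -big_split.
  by apply: eq_bigr => r _; rewrite phi_lin1 dualD dualZ.
apply: dual_ext => d; rewrite !Hstar_piE //.
under eq_bigr do rewrite dual_sum.
under [RHS]eq_bigr do rewrite Hstar_piE //.
by rewrite coassoc_dual.
Qed.

Lemma Hstar_pi_unit X Y (m : dualsp (H Y X)) :
  Hstar_pi K C X Y Y (fun c => (ε Y c : K) *: m) = m.
Proof.
have [_ [_ [_ [_ counit_r]]]] := C_coalg.
apply: dual_ext => d.
rewrite Hstar_piE; last by apply: linmap_scaler; apply: eps_linmap.
transitivity (m (\sum_(q <- δ Y Y X d) ε Y q.2 *: q.1)); last by rewrite counit_r.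
rewrite (linmap_sum (dual_linmap m)).
by apply: eq_bigr => q _; rewrite dualZ (linmapZ (dual_linmap m)).
Qed.

Lemma Hstar_ctr X : is_ctr K C (Hstar K C X).
Proof.
split; first exact: Hstar_pi_linear.
by split; [exact: Hstar_pi_assoc | exact: Hstar_pi_unit].
Qed.

Section HstarHom.
Variables (X : cObj C) (M : ctr_data K C).

Definition Hstar_hom (m : ctr_M K C M X) Y (psi : dualsp (H Y X)) : ctr_M K C M Y :=
  ctr_pi K C M Y X (fun c => (psi c : K) *: m).

Hypothesis M_ctr : is_ctr K C M.

Lemma Hstar_hom_morph m : @is_ctr_morph K C (Hstar K C X) M (Hstar_hom m).
Proof.
have [pi_lin [pi_assoc _]] := M_ctr.
split=> [Y a psi psi' | Y Z Phi Phi_lin].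
  rewrite /Hstar_hom -pi_lin; [|exact: dual_scaler_linmap..].
  by congr ctr_pi; apply: funext => c; rewrite dualD dualZ scalerDl scalerA.
rewrite /Hstar_hom -(pi_assoc Y Z X (fun b e => (Phi b e : K) *: m)).
- by congr ctr_pi; apply: funext => d; rewrite Hstar_piE // scaler_suml.
- by move=> b; apply: dual_scaler_linmap.
- by move=> a b b' c; rewrite Phi_lin dualD dualZ scalerDl scalerA.
Qed.

Lemma Hstar_hom_eps m : Hstar_hom m (to_dual (ε X)) = m.
Proof.
have [_ [_ pi_unit]] := M_ctr; rewrite /Hstar_hom -[RHS]pi_unit.
by congr ctr_pi; apply: funext => c; rewrite to_dualE //; apply: eps_linmap.
Qed.

End HstarHom.

Lemma ctr_morph_Hstar_hom X (M N : ctr_data K C)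
    (g : forall Y, ctr_M K C M Y -> ctr_M K C N Y) (m : ctr_M K C M X) :
  is_ctr_morph K C g ->
  forall Y psi, g Y (Hstar_hom m psi) = Hstar_hom (g X m) psi.
Proof.
move=> [g_lin g_pi] Y psi.
rewrite /Hstar_hom g_pi; last exact: dual_scaler_linmap.
by congr ctr_pi; apply: funext => c; rewrite (linmapZ (g_lin X)).
Qed.

Lemma Hstar_hom_eps_id X Y (psi : dualsp (H Y X)) :
  Hstar_hom (M := Hstar K C X) (to_dual (ε X)) psi = psi.
Proof.
have [_ [_ [_ [counit_l _]]]] := C_coalg.
apply: dual_ext => d; rewrite /Hstar_hom Hstar_piE; last first.
  exact: dual_scaler_linmap.
transitivity (psi (\sum_(q <- δ Y X X d) ε X q.1 *: q.2)); last by rewrite counit_l.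
rewrite (linmap_sum (dual_linmap psi)); apply: eq_bigr => q _.
rewrite dualZ (linmapZ (dual_linmap psi)) to_dualE; first exact: mulrC.
exact: eps_linmap.
Qed.

Lemma Hstar_morphE X (N : ctr_data K C)
    (f : forall Y, ctr_M K C (Hstar K C X) Y -> ctr_M K C N Y) :
  is_ctr_morph K C f ->
  forall Y psi, f Y psi = Hstar_hom (f X (to_dual (ε X))) psi.
Proof.
move=> f_morph Y psi.
by rewrite -(ctr_morph_Hstar_hom _ f_morph) Hstar_hom_eps_id.
Qed.

Lemma Hstar_projective X : ctr_projective K C (Hstar K C X).
Proof.
move=> M N g f M_ctr _ g_morph g_onto f_morph.
have [m gm] := g_onto X (f X (to_dual (ε X))).
exists (Hstar_hom m); split; first exact: Hstar_hom_morph.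
by move=> Y psi; rewrite ctr_morph_Hstar_hom // gm -Hstar_morphE.
Qed.

Lemma Hstar_generators : ctr_generators K C (cObj C) (Hstar K C).
Proof.
move=> M N u v M_ctr _ _ _ uv X m.
rewrite -(Hstar_hom_eps M_ctr m).
exact: (uv X _ (Hstar_hom_morph M_ctr m)).
Qed.

End Coalgebra.

Theorem proposition3p4 (K : fieldType) (C : coalg_data K) :
  is_coalg K C ->
  (forall X : cObj C, is_ctr K C (Hstar K C X)) /\
  (forall X : cObj C, ctr_projective K C (Hstar K C X)) /\
  ctr_generators K C (cObj C) (Hstar K C).
Proof.
move=> C_coalg; split; first exact: Hstar_ctr.
by split; [exact: Hstar_projective | exact: Hstar_generators].
Qed.
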